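(* A Q-net $f:\mathbb Z^m\to\mathbb R^N$ ($m\ge2$) is a discrete Koenigs net if and only if the multiplicative one-form $q$ of ratios of diagonal segments is closed on both the black graph and the white graph of $\mathbb Z^m$.
   Context: Let $N\ge 3$, $m\ge 2$. For a map $f:\mathbb Z^m\to\mathbb R^N$, write $e_i$ for the $i$-th unit vector of $\mathbb Z^m$, $f=f(u)$, $f_i=f(u+e_i)$, $f_{ij}=f(u+e_i+e_j)$; negative indices denote backward shifts, e.g. $f_{-1}=f(u-e_1)$, $f_{1,-2}=f(u+e_1-e_2)$; $\delta_i f=f_i-f$, and $\tau_i g(u)=g(u+e_i)$ for any function $g$ on $\mathbb Z^m$. A Q-net is a map $f:\mathbb Z^m\to\mathbb R^N$ such that for every $u$ and $i\ne j$ the elementary quadrilateral $(f,f_i,f_{ij},f_j)$ is planar; elementary quadrilaterals are assumed non-degenerate: four distinct vertices, no three collinear, and the diagonals $(ff_{ij})$, $(f_if_j)$ meet in a point $M$ different from all vertices. Two planar quadrilaterals $(A,B,C,D)$, $(A^*,B^*,C^*,D^* )$ are dual if corresponding sides are parallel ($A^*B^*\parallel AB$, $B^*C^*\parallel BC$, $C^*D^*\parallel CD$, $D^*A^*\parallel DA$) and non-corresponding diagonals are parallel ($A^*C^*\parallel BD$, $B^*D^*\parallel AC$). A Q-net $f$ is a discrete Koenigs net if there is a Q-net $f^*:\mathbb Z^m\to\mathbb R^N$ (a dual net) such that each $(f^*,f^*_i,f^*_{ij},f^*_j)$ is dual to $(f,f_i,f_{ij},f_j)$, i.e. $\delta_if^*\parallel\delta_if$,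 $\delta_jf^*\parallel\delta_jf$, $f^*_{ij}-f^*\parallel f_i-f_j$, $f^*_i-f^*_j\parallel f_{ij}-f$. For collinear points $P,Q$, $l(P,Q)$ denotes the directed (signed) length along their line (ratios of such lengths on one line are orientation-independent). Color $u\in\mathbb Z^m$ black if $u_1+\dots+u_m$ is even and white otherwise. Each elementary square $(u,u+e_i,u+e_i+e_j,u+e_j)$ has one diagonal joining two black points and one joining two white points. The black (resp. white) graph has as vertices the black (resp. white) points of $\mathbb Z^m$ and as edges the black (resp. white) diagonals of all elementary squares. For a Q-net $f$ and the quadrilateral $(f,f_i,f_{ij},f_j)$ with diagonal intersection $M$, set $q(u\to u+e_i+e_j)=l(M,f_{ij})/l(M,f)$ and $q(u+e_i\to u+e_j)=l(M,f_j)/l(M,f_i)$, with reversed direction giving the reciprocal value. A function $q$ on directed edges of a graph with $q(-e)=1/q(e)$ is a multiplicative one-form; it is closed if its product along every closed cycle of directed edges equals $1$. *)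

(* Points of R^N are row vectors 'rV[R]_N over an arbitrary
   real field R (the statement is purely algebraic); lattice points of Z^m are
   row vectors 'rV[int]_m. *)
From HB Require Import structures.
From mathcomp Require Import all_boot all_order all_algebra.
From Stdlib Require ClassicalEpsilon.
Set Implicit Arguments. Unset Strict Implicit. Unset Printing Implicit Defensive.
Import Order.TTheory GRing.Theory Num.Theory.
Local Open Scope ring_scope.

Section KoenigsDefs.
Variable R : realFieldType.
Variables N m : nat.
Local Notation point := 'rV[R]_N.
Local Notation lat := 'rV[int]_m.

Definition ev (i : 'I_m) : lat := delta_mx 0 i.

Definition black (u : lat) : bool := ~~ odd (absz (\sum_k u 0 k)).

Definition collinear3 (P Q S : point) : Prop :=
  (\rank (col_mx (Q - P) (S - P)) <= 1)%N.
Definition coplanar4 (A B C D : point) : Prop :=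
  (\rank (col_mx (B - A) (col_mx (C - A) (D - A))) <= 2)%N.
Definition on_line (P Q X : point) : Prop := exists a : R, X = P + a *: (Q - P).
Definition nondeg_quad (A B C D : point) : Prop :=
  [/\ uniq [:: A; B; C; D], ~ collinear3 A B C, ~ collinear3 B C D,
      ~ collinear3 C D A & ~ collinear3 D A B] /\
  exists M : point, [/\ on_line A C M, on_line B D M & M \notin [:: A; B; C; D]].
Definition planar_nondeg (A B C D : point) : Prop :=
  coplanar4 A B C D /\ nondeg_quad A B C D.

Definition Qnet (f : lat -> point) : Prop :=
  forall (u : lat) (i j : 'I_m), i != j ->
    planar_nondeg (f u) (f (u + ev i)) (f (u + ev i + ev j)) (f (u + ev j)).

Definition parallel (a b : point) : Prop := exists c : R, a = c *: b \/ b = c *: a.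

Definition dual_quad (A B C D Ast Bst Cst Dst : point) : Prop :=
  [/\ parallel (Bst - Ast) (B - A), parallel (Cst - Bst) (C - B),
      parallel (Dst - Cst) (D - C) & parallel (Ast - Dst) (A - D)] /\
  (parallel (Cst - Ast) (D - B) /\ parallel (Dst - Bst) (C - A)).

Definition Koenigs (f : lat -> point) : Prop :=
  exists fs : lat -> point, Qnet fs /\
    forall (u : lat) (i j : 'I_m), i != j ->
      dual_quad (f u) (f (u + ev i)) (f (u + ev i + ev j)) (f (u + ev j))
                (fs u) (fs (u + ev i)) (fs (u + ev i + ev j)) (fs (u + ev j)).

(* Directed edges of the black/white graphs: a step (i, j, s, t) with i != j
   moves x to x + (+-e_i) + (+-e_j) (sign + iff the boolean is true). *)
Definition step := ('I_m * 'I_m * bool * bool)%type.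
Definition sgv (b : bool) (i : 'I_m) : lat := if b then ev i else - ev i.
Definition disp (d : step) : lat :=
  let: (i, j, s, t) := d in sgv s i + sgv t j.
Definition valid_step (d : step) : bool :=
  let: (i, j, _, _) := d in i != j.

(* intersection point of the lines (PQ) and (ST) (chosen by Hilbert epsilon;
   unique when the lines are distinct and meet) *)
Definition isect (P Q S T : point) : point :=
  ClassicalEpsilon.epsilon (inhabits 0) (fun M => on_line P Q M /\ on_line S T M).
(* l(M,Y)/l(M,X) for Y, X collinear with M, X <> M: the l with Y - M = l (X - M) *)
Definition dlratio (M Y X : point) : R :=
  ClassicalEpsilon.epsilon (inhabits 0) (fun l : R => Y - M = l *: (X - M)).

(* q(x -> y) = l(M, f y) / l(M, f x), M the intersection of the diagonals of
   the elementary square containing the diagonal edge (x, y); its other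
   diagonal joins x + (+-e_i) and x + (+-e_j).  This agrees with both
   defining formulas of the paper and with q(-e) = 1/q(e). *)
Definition qform (f : lat -> point) (x : lat) (d : step) : R :=
  let: (i, j, s, t) := d in
  let y := x + disp d in
  let M := isect (f x) (f y) (f (x + sgv s i)) (f (x + sgv t j)) in
  dlratio M (f y) (f x).

Fixpoint qprod (f : lat -> point) (x : lat) (c : seq step) : R :=
  match c with
  | [::] => 1
  | d :: c' => qform f x d * qprod f (x + disp d) c'
  end.

Definition q_closed_on (col : bool) (f : lat -> point) : Prop :=
  forall (x : lat) (c : seq step), black x = col -> all valid_step c ->
    \sum_(d <- c) disp d = 0 -> qprod f x c = 1.

End KoenigsDefs.

(* A non-degenerate quadrilateral (A,B,C,D) has the normal form
   (M + p, M + r, M + b p, M + d r): M is the intersection of the diagonals,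
   p, r are independent, and b, d are the values of q on its two diagonals.
   A quadrilateral with edges w1 (B - A), w2 (C - B), w3 (C - D), w4 (D - A)
   is dual to it iff the Koenigs weight relations w1 = w2 b, w1 = w4 d,
   w4 = w3 b hold (dual_weights, dual_of_weights).  Both implications of the
   theorem go through a potential Phi of q, i.e. q(x -> y) = Phi y / Phi x:
   - Koenigs <-> potential: the edge factors of a dual net are exactly
     w(x,i) = 1 / (Phi x * Phi (x + e_i)); in each direction the missing
     object (Phi, resp. the dual net) is obtained by integrating a commuting
     family of bijections along the edges of Z^m (transport);
   - potential <-> closedness: a potential telescopes along closed walks;
     conversely two points of the same colour are joined by a walk of
     diagonal steps, and products of q along walks from one base point of
     each colour define a potential. *)

From HB Require Import structures.
From mathcomp Require Import all_boot all_order all_algebra.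
From mathcomp Require Import ring.
From Stdlib Require Import ClassicalEpsilon.
Set Implicit Arguments. Unset Strict Implicit. Unset Printing Implicit Defensive.
Import Order.TTheory GRing.Theory Num.Theory.
Local Open Scope ring_scope.

Ltac vec_ring := apply/rowP => ?; rewrite !mxE; ring.
Ltac vec_field := apply/rowP => ?; rewrite !mxE; field; by repeat (apply/andP; split).

Section Lattice.
Variable m : nat.
Local Notation lat := 'rV[int]_m.

Lemma sum_coord_ev (i : 'I_m) : \sum_k (ev i : lat) 0 k = 1.
Proof.
rewrite (bigD1 i) //= big1 ?addr0; first by rewrite mxE !eqxx.
by move=> k /negPf ki; rewrite mxE eqxx ki.
Qed.

Lemma odd_absz_addr1 (z : int) : odd (absz (z + 1)) = ~~ odd (absz z).
Proof.
case: z => [n|[|n]]; first by rewrite -PoszD addn1.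
  by [].
by rewrite NegzE /= subn1 /= negbK.
Qed.

Lemma black_ev (x : lat) i : black (x + ev i) = ~~ black x.
Proof.
rewrite /black -(odd_absz_addr1 (\sum_k x 0 k)) -(sum_coord_ev i) -big_split /=.
by under eq_bigr do rewrite mxE.
Qed.

Lemma black_evN (x : lat) i : black (x - ev i) = ~~ black x.
Proof. by rewrite -[in RHS](subrK (ev i) x) black_ev negbK. Qed.

Lemma black_disp (x : lat) d : black (x + disp d) = black x.
Proof.
case: d => [[[i j] [] []]];
by rewrite /= addrA ?black_ev ?black_evN ?black_ev ?black_evN negbK.
Qed.

Lemma black_walk (x : lat) (c : seq (step m)) : black (x + \sum_(d <- c) disp d) = black x.
Proof.
elim: c x => [|d c IH] x; first by rewrite big_nil addr0.
by rewrite big_cons addrA IH black_disp.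
Qed.

Definition is_walk (v : lat) (c : seq (step m)) : Prop :=
  all (@valid_step m) c /\ \sum_(d <- c) disp d = v.

Definition reach (v : lat) : Prop := exists c, is_walk v c.

Lemma reach0 : reach 0.
Proof. by exists [::]; rewrite /is_walk big_nil. Qed.

Lemma reachD u v : reach u -> reach v -> reach (u + v).
Proof.
move=> [c1 [v1 s1]] [c2 [v2 s2]]; exists (c1 ++ c2).
by rewrite /is_walk all_cat v1 v2 big_cat s1 s2.
Qed.

Definition opp_step (d : step m) : step m := let: (i, j, s, t) := d in (i, j, ~~ s, ~~ t).

Lemma disp_opp_step d : disp (opp_step d) = - disp d.
Proof. by case: d => [[[i j] [] []]]; rewrite /= opprD ?opprK. Qed.

Lemma reachN v : reach v -> reach (- v).
Proof.
move=> [c [vc sc]]; exists (map opp_step c); split.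
  by rewrite all_map; apply/allP => -[[[i j] s] t] /(allP vc).
by rewrite big_map (eq_bigr _ (fun d _ => disp_opp_step d)) sumrN sc.
Qed.

Lemma reach_step d : valid_step d -> reach (disp d).
Proof. by move=> vd; exists [:: d]; rewrite /is_walk /= vd big_seq1. Qed.

Lemma reachZ (z : int) v : reach v -> reach (z *: v).
Proof.
move=> hv; elim/int_ind: z => [|n IH|n IH]; first by rewrite scale0r; exact: reach0.
  by rewrite intS scalerDl scale1r; apply: reachD.
rewrite intS opprD scalerDl scaleN1r; apply: reachD IH; exact: reachN.
Qed.

Lemma reach_sum (F : 'I_m -> lat) : (forall k, reach (F k)) -> reach (\sum_k F k).
Proof. by move=> h; apply: (big_ind reach reach0 reachD) => k _. Qed.

Section TwoDirections.
Hypothesis hm : (1 < m)%N.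
Let i0 : 'I_m := Ordinal (ltnW hm).
Let i1 : 'I_m := Ordinal hm.

Lemma other_index (i : 'I_m) : exists j : 'I_m, i != j.
Proof.
have [e|e] := eqVneq i i0; first by exists i1; rewrite e; apply/eqP => /(congr1 val).
by exists i0.
Qed.

Lemma reach_or_reach_ev (v : lat) : reach v \/ reach (v - ev i0).
Proof.
set z := \sum_k v 0 k.
have diffs : reach (v - z *: ev i0).
  rewrite {1}(row_sum_delta v) /z scaler_suml -sumrB.
  apply: reach_sum => k; rewrite -scalerBr; apply: reachZ.
  have [->|ki] := eqVneq k i0; first by rewrite subrr; exact: reach0.
  exact: (@reach_step (k, i0, true, false)).
have two : reach (2%:Z *: ev i0).
  have ne : i0 != i1 by apply/eqP => /(congr1 val).
  have := reachD (@reach_step (i0, i1, true, true) ne) (@reach_step (i0, i1, true, false) ne).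
  by congr reach; rewrite /= addrACA subrr addr0 (_ : 2%Z = 1 + 1) // scalerDl scale1r.
have even : reach (v - (z %% 2)%Z *: ev i0).
  have -> : (z %% 2)%Z = z - (z %/ 2)%Z * 2 by rewrite {2}(divz_eq z 2) addrAC subrr add0r.
  by have := reachD diffs (reachZ (z %/ 2)%Z two); congr reach; vec_ring.
have [e|e] : (z %% 2)%Z = 0 \/ (z %% 2)%Z = 1.
  have : (0 <= (z %% 2)%Z) && ((z %% 2)%Z < 2) by rewrite modz_ge0 ?ltz_pmod.
  by case: (z %% 2)%Z => [[|[|n]]|n] //; [left|right].
- by left; rewrite e scale0r subr0 in even.
- by right; rewrite e scale1r in even.
Qed.

Lemma same_color_reach (x y : lat) : black x = black y -> reach (x - y).
Proof.
move=> e; case: (reach_or_reach_ev (x - y)) => // -[c [_ sc]].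
have ex : x = y + ev i0 + \sum_(d <- c) disp d by rewrite sc; vec_ring.
by move: e; rewrite ex black_walk black_ev; case: (black y).
Qed.
End TwoDirections.
End Lattice.

Section LineTransport.
Variable G : Type.
Variables S Si : int -> G -> G.
Hypothesis SiK : forall k, cancel (S k) (Si k).
Hypothesis SKi : forall k, cancel (Si k) (S k).

Fixpoint iter_up (g : G) (n : nat) : G :=
  if n is n'.+1 then S n' (iter_up g n') else g.

Fixpoint iter_down (g : G) (n : nat) : G :=
  if n is n'.+1 then Si (- n'.+1%:Z) (iter_down g n') else g.

Definition line_iter (g : G) (z : int) : G :=
  match z with Posz n => iter_up g n | Negz n => iter_down g n.+1 end.

Lemma line_iterS g z : line_iter g (z + 1) = S z (line_iter g z).
Proof.
case: z => [n|[|n]]; first by rewrite -PoszD addn1.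
  by rewrite /= SKi.
have -> : Negz n.+1 + 1 = Negz n by rewrite !NegzE intS opprD addrAC addNr add0r.
by rewrite /= NegzE SKi.
Qed.

Lemma line_iter_unique (h : int -> G) :
  (forall z, h (z + 1) = S z (h z)) -> forall z, h z = line_iter (h 0) z.
Proof.
move=> hS; elim/int_ind => [//|n IH|n IH].
  by rewrite intS addrC hS IH -line_iterS.
apply: (can_inj (SiK (- n.+1%:Z))).
rewrite -hS -line_iterS.
by have -> : - n.+1%:Z + 1 = - n%:Z by rewrite intS opprD addrAC addNr add0r.
Qed.
End LineTransport.

Section Transport.
Variables (m : nat) (G : Type).
Local Notation lat := 'rV[int]_m.
Variables T Ti : lat -> 'I_m -> G -> G.
Hypothesis TiK : forall x i, cancel (T x i) (Ti x i).
Hypothesis TKi : forall x i, cancel (Ti x i) (T x i).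
Hypothesis Tcomm : forall x i j g, T (x + ev i) j (T x i g) = T (x + ev j) i (T x j g).
Variable g0 : G.

Definition move (p : lat) (i : 'I_m) : G -> int -> G :=
  line_iter (fun k => T (p + k *: ev i) i) (fun k => Ti (p + k *: ev i) i).

Lemma moveS p i g z : move p i g (z + 1) = T (p + z *: ev i) i (move p i g z).
Proof. exact: line_iterS. Qed.

Lemma move_comm p i j g z :
  move (p + ev j) i (T p j g) z = T (p + z *: ev i) j (move p i g z).
Proof.
pose h z := T (p + z *: ev i) j (move p i g z).
have h0 : h 0 = T p j g by rewrite /h scale0r addr0.
rewrite -h0; symmetry.
apply: (line_iter_unique (fun k => TiK _ i) (fun k => TKi _ i)) => k.
by rewrite /h moveS scalerDl scale1r addrA Tcomm (addrAC p).
Qed.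

Lemma coord_ev (x : lat) (i l : 'I_m) : (x + ev i) 0 l = x 0 l + (l == i)%:R.
Proof. by rewrite !mxE eqxx. Qed.

Definition head_part (k : nat) (x : lat) : lat := \row_l (if (l < k)%N then x 0 l else 0).

(* transport of g0 from the origin to head_part k x, one coordinate at a time *)
Fixpoint integrate (k : nat) (x : lat) : G :=
  if k is k'.+1 then
    if (insub k' : option 'I_m) is Some i
    then move (head_part k' x) i (integrate k' x) (x 0 i) else integrate k' x
  else g0.

Lemma head_part_eq k (x y : lat) :
  (forall l : 'I_m, (l < k)%N -> x 0 l = y 0 l) -> head_part k x = head_part k y.
Proof. by move=> H; apply/rowP=> l; rewrite !mxE; case: ifP => // /H. Qed.

Lemma integrate_eq k (x y : lat) :
  (forall l : 'I_m, (l < k)%N -> x 0 l = y 0 l) -> integrate k x = integrate k y.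
Proof.
elim: k => [|k IH] H //=.
have H' (l : 'I_m) : (l < k)%N -> x 0 l = y 0 l by move=> lk; apply/H/ltnW.
case: insubP => [i _ ei|_]; last exact: IH.
by rewrite IH // (head_part_eq H') H ?ei.
Qed.

Lemma head_part_succ (i : 'I_m) (x : lat) :
  head_part i.+1 x = head_part i x + x 0 i *: ev i.
Proof.
apply/rowP=> l; rewrite !mxE eqxx ltnS leq_eqVlt val_eqE.
by have [->|/negPf li] := eqVneq l i; rewrite ?eqxx ?ltnn ?li /= ?add0r ?mulr1 ?mulr0 ?addr0.
Qed.

(* the section property of integrate k in the directions i < k, by induction
   on k: earlier directions commute past the last move by move_comm *)
Lemma integrate_step k (x : lat) (i : 'I_m) : (k <= m)%N -> (i < k)%N ->
  integrate k (x + ev i) = T (head_part k x) i (integrate k x).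
Proof.
elim: k => [|k IH] // km ik /=.
case: insubP => [i0 _ ei0|]; last by rewrite (leq_trans _ km).
have hp := head_part_succ i0 x; rewrite ei0 in hp; rewrite hp.
move: ik; rewrite ltnS leq_eqVlt => /orP[/eqP ik | ik].
  have ii0 : i = i0 by apply: val_inj; rewrite /= ik ei0.
  subst i0; rewrite coord_ev eqxx -moveS.
  have same (l : 'I_m) : (l < k)%N -> (x + ev i) 0 l = x 0 l.
    move=> lk; rewrite coord_ev (_ : l == i = false) ?addr0 //.
    by apply: contraTF lk => /eqP ->; rewrite ik ltnn.
  by rewrite (head_part_eq same) (integrate_eq same).
have -> : head_part k (x + ev i) = head_part k x + ev i.
  apply/rowP=> l; rewrite !mxE eqxx; case: ifP => // lk.
  by rewrite (_ : l == i = false) ?add0r //; apply: contraFF lk => /eqP ->.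
rewrite coord_ev (_ : i0 == i = false) ?addr0; last first.
  by apply: contraTF ik => /eqP <-; rewrite ei0 ltnn.
by rewrite IH ?(ltnW km) // move_comm.
Qed.

Lemma transport : exists F : lat -> G, forall x i, F (x + ev i) = T x i (F x).
Proof.
exists (integrate m) => x i.
have full : head_part m x = x by apply/rowP=> l; rewrite mxE ltn_ord.
by rewrite integrate_step // full.
Qed.
End Transport.

Section PlaneGeometry.
Variables (R : realFieldType) (N : nat).
Local Notation point := 'rV[R]_N.

Definition indep2 (p r : point) : bool := (1 < \rank (col_mx p r))%N.

Lemma comb_mulmx (a b : R) (p r : point) : a *: p + b *: r = row_mx a%:M b%:M *m col_mx p r.
Proof. by rewrite mul_row_col !mul_scalar_mx. Qed.

Lemma rank_comb2 (a b c d : R) (p r X Y : point) :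
  X = a *: p + b *: r -> Y = c *: p + d *: r ->
  (\rank (col_mx X Y) <= \rank (col_mx p r))%N.
Proof. by move=> -> ->; rewrite !comb_mulmx -mul_col_mx mxrankM_maxr. Qed.

Lemma rank_comb3 (a b c d e g : R) (p r X Y Z : point) :
  X = a *: p + b *: r -> Y = c *: p + d *: r -> Z = e *: p + g *: r ->
  (\rank (col_mx X (col_mx Y Z)) <= 2)%N.
Proof.
move=> -> -> ->; rewrite !comb_mulmx -!mul_col_mx.
exact: leq_trans (mxrankM_maxr _ _) (rank_leq_row _).
Qed.

Lemma indep2_coef (p r : point) a b : indep2 p r -> a *: p + b *: r = 0 -> a = 0 /\ b = 0.
Proof.
move=> h e; have rf : row_free (col_mx p r) by rewrite /row_free eqn_leq rank_leq_row.
have /eqP : row_mx a%:M b%:M = 0 :> 'rV_(1 + 1).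
  by apply: (row_free_inj rf); rewrite mul0mx -comb_mulmx.
rewrite row_mx_eq0 => /andP[/eqP/matrixP/(_ 0 0) ha /eqP/matrixP/(_ 0 0) hb].
by move: ha hb; rewrite !mxE.
Qed.

Lemma indep2_neq (p r : point) : indep2 p r -> [/\ p != 0, r != 0 & p != r].
Proof.
move=> h; split; apply/eqP => e.
- have := @indep2_coef p r 1 0 h; rewrite e scaler0 scale0r addr0 => /(_ erefl).
  by case=> /eqP; rewrite oner_eq0.
- have := @indep2_coef p r 0 1 h; rewrite e scaler0 scale0r addr0 => /(_ erefl).
  by case=> _ /eqP; rewrite oner_eq0.
- have := @indep2_coef p r 1 (-1) h; rewrite e scaleN1r scale1r subrr => /(_ erefl).
  by case=> /eqP; rewrite oner_eq0.
Qed.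

Lemma indep2_of_comb (a b c d : R) (p r X Y : point) :
  X = a *: p + b *: r -> Y = c *: p + d *: r -> indep2 X Y -> indep2 p r.
Proof. by move=> eX eY h; exact: leq_trans h (rank_comb2 eX eY). Qed.

Lemma indep2_comb (a b c d : R) (p r X Y : point) : indep2 p r -> a * d - b * c != 0 ->
  X = a *: p + b *: r -> Y = c *: p + d *: r -> indep2 X Y.
Proof.
move=> h D eX eY.
apply: (@indep2_of_comb (d / (a * d - b * c)) (- b / (a * d - b * c))
                        (- c / (a * d - b * c)) (a / (a * d - b * c))) h.
- by rewrite eX eY; vec_field.
- by rewrite eX eY; vec_field.
Qed.

Lemma noncollinearP (P Q S : point) : ~ collinear3 P Q S <-> indep2 (Q - P) (S - P).
Proof. by rewrite /collinear3 /indep2 ltnNge; split => [/negP|/negP]. Qed.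

Lemma noncollinear_comb (a b c d : R) (p r P Q S : point) :
  indep2 p r -> a * d - b * c != 0 ->
  Q - P = a *: p + b *: r -> S - P = c *: p + d *: r -> ~ collinear3 P Q S.
Proof. by move=> h D eQ eS; apply/noncollinearP; exact: indep2_comb h D eQ eS. Qed.

Lemma noncollinear_neq (P Q S : point) : ~ collinear3 P Q S -> [/\ P != Q, P != S & Q != S].
Proof.
move/noncollinearP/indep2_neq => [].
by rewrite !subr_eq0 (inj_eq (addIr _)) ![_ == P]eq_sym.
Qed.

(* the normal form of a non-degenerate quadrilateral (A,B,C,D) =
   (M + p, M + r, M + b p, M + d r): M is the intersection of the diagonals,
   b = l(M,C)/l(M,A) and d = l(M,D)/l(M,B) *)
Definition quad_shape (A B C D M p r : point) (b d : R) : Prop :=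
  [/\ A = M + p, B = M + r, C = M + b *: p & D = M + d *: r] /\
  [/\ indep2 p r, b != 0, b != 1, d != 0 & d != 1].

Lemma nondeg_shape (A B C D : point) : nondeg_quad A B C D ->
  exists M p r b d, quad_shape A B C D M p r b d.
Proof.
case=> [[_ nABC nBCD _ _] [M [[al eAC] [be eBD]]]].
rewrite !inE !negb_or => /and4P[nMA nMB nMC nMD].
have [_ nAC _] := noncollinear_neq nABC; have [_ nBD _] := noncollinear_neq nBCD.
have al0 : al != 0 by apply: contraNneq nMA => a0; rewrite eAC a0 scale0r addr0.
have be0 : be != 0 by apply: contraNneq nMB => b0; rewrite eBD b0 scale0r addr0.
exists M, (A - M), (B - M), ((al - 1) / al), ((be - 1) / be).
have eC : C = M + (al - 1) / al *: (A - M) by rewrite eAC; vec_field.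
have eD : D = M + (be - 1) / be *: (B - M) by rewrite eBD; vec_field.
split; first by split; rewrite // addrC subrK.
split.
- apply: (@indep2_of_comb (-1) 1 ((al - 1) / al - 1) 0 _ _ (B - A) (C - A));
    [by vec_ring | by rewrite {1}eC; vec_ring | exact/noncollinearP].
- by apply: contraNneq nMC => e0; rewrite eC e0 scale0r addr0.
- by apply: contraNneq nAC => e1; rewrite eC e1 scale1r addrC subrK.
- by apply: contraNneq nMD => e0; rewrite eD e0 scale0r addr0.
- by apply: contraNneq nBD => e1; rewrite eD e1 scale1r addrC subrK.
Qed.

Lemma on_line_dir (M v P Q Z : point) x1 x2 :
  P = M + x1 *: v -> Q = M + x2 *: v -> on_line P Q Z -> exists k, Z = M + k *: v.
Proof.
move=> eP eQ [a eZ]; exists (x1 + a * (x2 - x1)).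
by rewrite eZ eP eQ; vec_ring.
Qed.

Lemma on_line_base (M v P Q : point) x1 x2 :
  x1 != x2 -> P = M + x1 *: v -> Q = M + x2 *: v -> on_line P Q M.
Proof.
move=> hx eP eQ; have hx' : x2 - x1 != 0 by rewrite subr_eq0 eq_sym.
by exists (- x1 / (x2 - x1)); rewrite eP eQ; vec_field.
Qed.

Section Shape.
Variables (A B C D M p r : point) (b d : R).
Hypothesis shape : quad_shape A B C D M p r b d.

Lemma shape_nondeg : planar_nondeg A B C D.
Proof.
case: shape => [[-> -> -> ->] [h b0 b1 d0 d1]].
have b1' : b - 1 != 0 by rewrite subr_eq0.
have d1' : d - 1 != 0 by rewrite subr_eq0.
have [p0 r0 _] := indep2_neq h.
have nABC : ~ collinear3 (M + p) (M + r) (M + b *: p).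
  apply: (@noncollinear_comb (-1) 1 (b - 1) 0 p r) => //; try vec_ring.
  by rewrite mulr0 sub0r mul1r oppr_eq0.
have nBCD : ~ collinear3 (M + r) (M + b *: p) (M + d *: r).
  apply: (@noncollinear_comb b (-1) 0 (d - 1) p r) => //; try vec_ring.
  by rewrite mulr0 subr0 mulf_neq0.
have nCDA : ~ collinear3 (M + b *: p) (M + d *: r) (M + p).
  apply: (@noncollinear_comb (- b) d (1 - b) 0 p r) => //; try vec_ring.
  by rewrite mulr0 sub0r oppr_eq0 mulf_neq0 // subr_eq0 eq_sym.
have nDAB : ~ collinear3 (M + d *: r) (M + p) (M + r).
  apply: (@noncollinear_comb 1 (- d) 0 (1 - d) p r) => //; try vec_ring.
  by rewrite mulr0 subr0 mul1r subr_eq0 eq_sym.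
have [nAB nAC nBC] := noncollinear_neq nABC.
have [_ nBD nCD] := noncollinear_neq nBCD.
have [nDA _ _] := noncollinear_neq nDAB.
split.
  by apply: (@rank_comb3 (-1) 1 (b - 1) 0 (-1) d p r); vec_ring.
split.
  split=> //; rewrite /= !inE !negb_or nAB nAC nBC nBD nCD andbT /=.
  by rewrite eq_sym nDA.
have b1'' : 1 - b != 0 by rewrite subr_eq0 eq_sym.
have d1'' : 1 - d != 0 by rewrite subr_eq0 eq_sym.
exists M; split.
- by exists (1 - b)^-1; vec_field.
- by exists (1 - d)^-1; vec_field.
- have hM v : (M == M + v) = (v == 0).
    by rewrite -{1}(addr0 M) (inj_eq (addrI M)) eq_sym.
  by rewrite !inE !negb_or !hM !scaler_eq0 !negb_or p0 r0 b0 d0.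
Qed.

Lemma shape_swap : quad_shape B A D C M r p d b.
Proof.
case: shape => [[eA eB eC eD] [h b0 b1 d0 d1]]; split=> //; split=> //.
by apply: (@indep2_comb 0 1 1 0 p r) => //;
  [rewrite !mulr0 sub0r mulr1 oppr_eq0 oner_eq0 | vec_ring | vec_ring].
Qed.

Lemma shape_opp : quad_shape C D A B M (b *: p) (d *: r) b^-1 d^-1.
Proof.
case: shape => [[eA eB eC eD] [h b0 b1 d0 d1]]; split.
  by split=> //; rewrite ?eA ?eB scalerA mulVf // scale1r.
split; rewrite ?invr_eq0 ?invr_eq1 //.
apply: (@indep2_comb b 0 0 d p r) => //; try vec_ring.
by rewrite mulr0 subr0 mulf_neq0.
Qed.

Lemma shape_isect : isect A C B D = M.
Proof.
case: shape => [[eA eB eC eD] [h b0 b1 d0 d1]].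
have eA' : A = M + 1 *: p by rewrite scale1r.
have eB' : B = M + 1 *: r by rewrite scale1r.
have ex : exists Z, on_line A C Z /\ on_line B D Z.
  by exists M; split; [apply: (on_line_base _ eA' eC) | apply: (on_line_base _ eB' eD)];
     rewrite eq_sym.
have [onAC onBD] := epsilon_spec (inhabits 0) _ ex.
rewrite /isect; set Z := epsilon _ _ in onAC onBD *.
have [k1 e1] := on_line_dir eA' eC onAC.
have [k2 e2] := on_line_dir eB' eD onBD.
have [k10 _] : k1 = 0 /\ - k2 = 0.
  by apply: (indep2_coef h); rewrite -(subrr Z) {1}e1 e2; vec_ring.
by rewrite e1 k10 scale0r addr0.
Qed.

Lemma shape_dlratio : dlratio M C A = b.
Proof.
case: shape => [[-> _ -> _] [h _ _ _ _]]; have [p0 _ _] := indep2_neq h.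
have sub v : M + v - M = v by rewrite addrC addKr.
have ex : exists l : R, M + b *: p - M = l *: (M + p - M) by exists b; rewrite !sub.
have := epsilon_spec (inhabits 0) _ ex; rewrite -/(dlratio _ _ _) !sub.
move/eqP; rewrite -subr_eq0 -scalerBl scaler_eq0 (negPf p0) orbF subr_eq0.
by move/eqP.
Qed.
End Shape.

Lemma parallel_coef (a v : point) : parallel a v -> a != 0 -> v != 0 ->
  exists2 k, k != 0 & a = k *: v.
Proof.
case=> c [e|e] a0 v0.
  by exists c => //; apply: contraNneq a0 => c0; rewrite e c0 scale0r.
have c0 : c != 0 by apply: contraNneq v0 => c0; rewrite e c0 scale0r.
by exists c^-1; rewrite ?invr_eq0 // e scalerA mulVf // scale1r.
Qed.

Lemma parallel_dir_coef (p r : point) a b c : indep2 p r -> c != 0 ->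
  parallel (a *: p + b *: r) (c *: r) -> a = 0.
Proof.
move=> h c0 [k [/eqP e|/eqP e]]; rewrite -subr_eq0 in e; move/eqP: e => e.
  have e' : a *: p + (b - k * c) *: r = 0 by rewrite -e; vec_ring.
  by case: (indep2_coef h e').
have e' : (- k * a) *: p + (c - k * b) *: r = 0 by rewrite -e; vec_ring.
have [ka kb] := indep2_coef h e'.
have k0 : k != 0 by apply: contraNneq c0 => k0; move: kb; rewrite k0 mul0r subr0 => ->.
by move/eqP: ka; rewrite mulf_eq0 oppr_eq0 (negPf k0) => /eqP.
Qed.

(* the edge factors w1 = AB, w2 = BC, w3 = DC, w4 = AD of a quadrilateral
   dual to one with diagonal ratios b, d *)
Definition koenigs_weights (b d w1 w2 w3 w4 : R) : Prop :=
  [/\ w1 = w2 * b, w1 = w4 * d & w4 = w3 * b].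

Section Duality.
Variables (A B C D M p r : point) (b d : R).
Hypothesis shape : quad_shape A B C D M p r b d.

Lemma dual_weights (As Bs Cs Ds : point) (w1 w2 w3 w4 : R) :
  Bs = As + w1 *: (B - A) -> Cs = Bs + w2 *: (C - B) ->
  Ds = As + w4 *: (D - A) -> Cs = Ds + w3 *: (C - D) ->
  parallel (Cs - As) (D - B) -> parallel (Ds - Bs) (C - A) ->
  koenigs_weights b d w1 w2 w3 w4.
Proof.
have [_ [hrp _ _ _ _]] := shape_swap shape.
case: shape => [[-> -> -> ->] [h b0 b1 d0 d1]] -> -> -> closing diagCA diagDB.
have d1' : d - 1 != 0 by rewrite subr_eq0.
have b1' : b - 1 != 0 by rewrite subr_eq0.
have e1 : w2 * b - w1 = 0.
  apply: (parallel_dir_coef (b := w1 - w2) h d1').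
  by move: diagCA; congr parallel; vec_ring.
have e2 : w4 * d - w1 = 0.
  apply: (parallel_dir_coef (b := w1 - w4) hrp b1').
  by move: diagDB; congr parallel; vec_ring.
move/eqP: closing; rewrite -subr_eq0 => /eqP closing.
have [e3 _] : (w2 * b - w1) - (w3 * b - w4) = 0 /\ (w1 - w2) - (w4 * d - w3 * d) = 0.
  by apply: (indep2_coef h); rewrite -closing; vec_ring.
split; [exact/esym/subr0_eq | exact/esym/subr0_eq |].
by apply: subr0_eq; rewrite -e3 (subr0_eq e1); ring.
Qed.

Lemma weights_closed (w1 w2 w3 w4 : R) : koenigs_weights b d w1 w2 w3 w4 ->
  w1 *: (B - A) + w2 *: (C - B) = w4 *: (D - A) + w3 *: (C - D).
Proof.
case: shape => [[-> -> -> ->] [h b0 b1 d0 d1]] [e1 e2 e3].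
have e4 : w2 = w3 * d by apply: (mulIf b0); rewrite -e1 e2 e3; ring.
by rewrite e1 e4 e3; vec_ring.
Qed.

Lemma dual_of_weights (As Bs Cs Ds : point) (w1 w2 w4 : R) :
  w1 != 0 -> w1 = w2 * b -> w1 = w4 * d ->
  Bs = As + w1 *: (B - A) -> Cs = Bs + w2 *: (C - B) -> Ds = As + w4 *: (D - A) ->
  planar_nondeg As Bs Cs Ds /\ dual_quad A B C D As Bs Cs Ds.
Proof.
case: shape => [[-> -> -> ->] [h b0 b1 d0 d1]] w0 e2 e4 -> -> ->.
have -> : w2 = w1 / b by rewrite e2 mulfK.
have -> : w4 = w1 / d by rewrite e4 mulfK.
have b1' : b - 1 != 0 by rewrite subr_eq0.
have d1' : d - 1 != 0 by rewrite subr_eq0.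
split.
  apply: (shape_nondeg (M := As + w1 *: r) (p := - w1 *: r) (r := - w1 *: p)
                       (b := b^-1) (d := d^-1)).
  split; first by split; vec_field.
  split; rewrite ?invr_eq0 ?invr_eq1 //.
  apply: (@indep2_comb 0 (- w1) (- w1) 0 p r) => //; try vec_ring.
  by rewrite !mulr0 sub0r mulrNN oppr_eq0 mulf_neq0.
split; first split.
- by exists w1; left; vec_ring.
- by exists (w1 / b); left; vec_ring.
- by exists (w1 / (b * d)); left; vec_field.
- by exists (w1 / d); left; vec_field.
split.
- by exists ((w1 - w1 / b) / (d - 1)); left; vec_field.
- by exists ((w1 - w1 / d) / (b - 1)); left; vec_field.
Qed.
End Duality.
End PlaneGeometry.

Section KoenigsNets.
Variables (R : realFieldType) (N m : nat).
Local Notation point := 'rV[R]_N.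
Local Notation lat := 'rV[int]_m.
Variable f : lat -> point.
Hypothesis hf : Qnet f.

Lemma qform_shape (x y1 y2 y3 : lat) (i j : 'I_m) s t M p r b d :
  x + sgv s i = y1 -> x + disp (i, j, s, t) = y2 -> x + sgv t j = y3 ->
  quad_shape (f x) (f y1) (f y2) (f y3) M p r b d -> qform f x (i, j, s, t) = b.
Proof.
by move=> e1 e2 e3 sh; rewrite /qform e1 e2 e3 (shape_isect sh) (shape_dlratio sh).
Qed.

Lemma square_qforms (u : lat) (i j : 'I_m) : i != j -> exists M p r b d,
  quad_shape (f u) (f (u + ev i)) (f (u + ev i + ev j)) (f (u + ev j)) M p r b d /\
  [/\ qform f u (i, j, true, true) = b,
      qform f (u + ev i + ev j) (i, j, false, false) = b^-1,
      qform f (u + ev i) (i, j, false, true) = d &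
      qform f (u + ev j) (i, j, true, false) = d^-1].
Proof.
move=> ij; have [_ /nondeg_shape [M [p [r [b [d sh]]]]]] := hf u ij.
exists M, p, r, b, d; split=> //; split.
- by apply: (qform_shape _ _ _ sh); rewrite /= ?addrA.
- by apply: (qform_shape _ _ _ (shape_opp sh)); rewrite /=; vec_ring.
- by apply: (qform_shape _ _ _ (shape_swap sh)); rewrite /=; vec_ring.
- by apply: (qform_shape _ _ _ (shape_opp (shape_swap sh))); rewrite /=; vec_ring.
Qed.

Definition q_potential (Phi : lat -> R) : Prop :=
  (forall x, Phi x != 0) /\
  forall x d, valid_step d -> qform f x d = Phi (x + disp d) / Phi x.

Lemma qprod_cat (x : lat) (c1 c2 : seq (step m)) :
  qprod f x (c1 ++ c2) = qprod f x c1 * qprod f (x + \sum_(d <- c1) disp d) c2.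
Proof.
elim: c1 x => [|d c1 IH] x /=; first by rewrite big_nil addr0 mul1r.
by rewrite IH big_cons addrA mulrA.
Qed.

(* an exact form is closed: its product along a walk telescopes *)
Lemma closed_of_potential Phi col : q_potential Phi -> q_closed_on col f.
Proof.
case=> Phi0 dPhi.
have telescope x c : all (@valid_step m) c ->
    qprod f x c = Phi (x + \sum_(d <- c) disp d) / Phi x.
  elim: c x => [|d c IH] x /=; first by rewrite big_nil addr0 divff.
  case/andP=> vd vc; rewrite dPhi // IH // big_cons addrA.
  by rewrite mulrC mulrA divfK.
by move=> x c _ vc c0; rewrite telescope // c0 addr0 divff.
Qed.

(* a potential only has to be checked on the two positive diagonals of each
   elementary square: the other diagonals carry the inverse values *)
Lemma potential_of_squares (Phi : lat -> R) : (forall x, Phi x != 0) ->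
  (forall u i j, i != j ->
     Phi (u + ev i + ev j) = qform f u (i, j, true, true) * Phi u /\
     Phi (u + ev j) = qform f (u + ev i) (i, j, false, true) * Phi (u + ev i)) ->
  q_potential Phi.
Proof.
move=> Phi0 sq; split=> // x [[[i j] s] t] ij; have {}ij : i != j := ij.
case: s; case: t; rewrite [disp _]/=.
- by have [e _] := sq x i j ij; rewrite addrA e mulfK ?Phi0.
- have [u ->] : exists u, x = u + ev j by exists (x - ev j); rewrite subrK.
  have [M [p [r [b [d [[_ [_ _ _ d0 _]] [_ _ qFT ->]]]]]]] := square_qforms u ij.
  have [_ e] := sq u i j ij; rewrite qFT in e; rewrite e.
  have -> : u + ev j + (ev i - ev j) = u + ev i by vec_ring.
  by field; rewrite d0 Phi0.
- have [u ->] : exists u, x = u + ev i by exists (x - ev i); rewrite subrK.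
  have [M [p [r [b [d [_ [_ _ qFT _]]]]]]] := square_qforms u ij.
  have [_ e] := sq u i j ij; rewrite qFT in e *.
  have -> : u + ev i + (- ev i + ev j) = u + ev j by vec_ring.
  by rewrite e mulfK ?Phi0.
- have [u ->] : exists u, x = u + ev i + ev j by exists (x - ev i - ev j); vec_ring.
  have [M [p [r [b [d [[_ [_ b0 _ _ _]] [qTT -> _ _]]]]]]] := square_qforms u ij.
  have [e _] := sq u i j ij; rewrite qTT in e; rewrite e.
  have -> : u + ev i + ev j + (- ev i - ev j) = u by vec_ring.
  by field; rewrite b0 Phi0.
Qed.

(* Closedness on both graphs gives a potential: on each colour class take the
   product of q along a walk from a base point of that colour. *)
Section ClosedIsExact.
Hypothesis hm : (1 < m)%N.
Hypothesis closed_black : q_closed_on true f.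
Hypothesis closed_white : q_closed_on false f.

Definition walk_to (v : lat) : seq (step m) := epsilon (inhabits [::]) (is_walk v).

Lemma walk_toP v : reach v -> is_walk v (walk_to v).
Proof. exact: epsilon_spec. Qed.

Definition walk_potential (o x : lat) : R := qprod f o (walk_to (x - o)).

Lemma closed_at (o : lat) : q_closed_on (black o) f.
Proof. by case: (black o). Qed.

Lemma walk_potentialP (o x : lat) d : black x = black o -> valid_step d ->
  walk_potential o (x + disp d) = qform f x d * walk_potential o x /\ walk_potential o x != 0.
Proof.
move=> bx vd.
have [v1 s1] := walk_toP (same_color_reach hm bx).
have [v2 s2] : is_walk (x + disp d - o) (walk_to (x + disp d - o)).
  by apply/walk_toP/same_color_reach; rewrite ?black_disp.
have [v3 s3] : is_walk (o - (x + disp d)) (walk_to (o - (x + disp d))).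
  by apply/walk_toP; rewrite -opprB; apply/reachN/same_color_reach; rewrite ?black_disp.
have loop1 : qprod f o (walk_to (x - o) ++ d :: walk_to (o - (x + disp d))) = 1.
  apply: closed_at => //; first by rewrite all_cat v1 /= vd v3.
  by rewrite big_cat big_cons s1 s3 /=; vec_ring.
have loop2 : qprod f o (walk_to (x + disp d - o) ++ walk_to (o - (x + disp d))) = 1.
  apply: closed_at => //; first by rewrite all_cat v2 v3.
  by rewrite big_cat s2 s3 /=; vec_ring.
rewrite qprod_cat s1 /= (_ : o + (x - o) = x) in loop1; last by vec_ring.
rewrite qprod_cat s2 (_ : o + (x + disp d - o) = x + disp d) in loop2; last by vec_ring.
rewrite /walk_potential; set back := qprod f (x + disp d) _ in loop1 loop2.
have back0 : back != 0 by apply: contra_eq_neq loop2 => ->; rewrite mulr0 eq_sym oner_neq0.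
split; last by apply: contra_eq_neq loop1 => ->; rewrite mul0r eq_sym oner_neq0.
by apply: (mulIf back0); rewrite loop2 -loop1 mulrCA mulrA.
Qed.

Lemma potential_of_closed : exists Phi, q_potential Phi.
Proof.
pose i0 : 'I_m := Ordinal (ltnW hm).
have black0 : black (0 : lat) by rewrite /black big1 // => k _; rewrite mxE.
pose Phi x := if black x then walk_potential 0 x else walk_potential (ev i0) x.
have PhiP x d : valid_step d -> Phi (x + disp d) = qform f x d * Phi x /\ Phi x != 0.
  rewrite /Phi black_disp; case: ifP => bx vd; apply: walk_potentialP => //.
    by rewrite bx black0.
  by rewrite bx -(add0r (ev i0)) black_ev black0.
have Phi0 x : Phi x != 0.
  have [j ij] := other_index hm i0.
  by case: (PhiP x (i0, j, true, true) ij).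
exists Phi; split=> // x d vd.
by have [-> _] := PhiP x d vd; rewrite mulfK.
Qed.
End ClosedIsExact.

Definition square_weights (w : lat -> 'I_m -> R) (u : lat) (i j : 'I_m) : Prop :=
  koenigs_weights (qform f u (i, j, true, true)) (qform f (u + ev i) (i, j, false, true))
                  (w u i) (w (u + ev i) j) (w (u + ev j) i) (w u j).

Definition edge_factor (fs : lat -> point) (x : lat) (i : 'I_m) (k : R) : Prop :=
  k != 0 /\ fs (x + ev i) = fs x + k *: (f (x + ev i) - f x).

Lemma dual_edge_factor (hm : (1 < m)%N) (fs : lat -> point) : Qnet fs ->
  (forall u i j, i != j ->
     dual_quad (f u) (f (u + ev i)) (f (u + ev i + ev j)) (f (u + ev j))
               (fs u) (fs (u + ev i)) (fs (u + ev i + ev j)) (fs (u + ev j))) ->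
  forall x i, exists k, edge_factor fs x i k.
Proof.
move=> hfs hdual x i; have [j ij] := other_index hm i.
have [_ [[uniq_s _ _ _ _] _]] := hfs x i j ij.
have [_ [[uniq_f _ _ _ _] _]] := hf x ij.
have [[par _ _ _] _] := hdual x i j ij.
have nz (A B C D : point) : uniq [:: A; B; C; D] -> B - A != 0.
  by rewrite /= !inE subr_eq0 eq_sym => /andP[/norP[]].
have [k k0 ek] := parallel_coef par (nz _ _ _ _ uniq_s) (nz _ _ _ _ uniq_f).
by exists k; split; rewrite // -ek [fs x + _]addrC subrK.
Qed.

(* a Koenigs net carries a potential: Phi(x + e_i) = 1 / (w(x,i) Phi(x)) *)
Lemma potential_of_koenigs (hm : (1 < m)%N) : Koenigs f -> exists Phi, q_potential Phi.
Proof.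
case=> fs [hfs hdual].
pose w x i := epsilon (inhabits 0) (edge_factor fs x i).
have wP x i : edge_factor fs x i (w x i).
  exact: epsilon_spec (dual_edge_factor hm hfs hdual x i).
have weights u i j : i != j -> square_weights w u i j.
  move=> ij; rewrite /square_weights.
  have [M [p [r [b [d [sh [-> _ -> _]]]]]]] := square_qforms u ij.
  have [_ [par1 par2]] := hdual u i j ij.
  apply: (dual_weights sh (wP u i).2 (wP _ j).2 (wP u j).2 _ par1 par2).
  by rewrite -(addrAC u (ev j) (ev i)); exact: (wP _ i).2.
pose G := {g : R | g != 0}.
pose T x i (g : G) : G :=
  exist _ (w x i * val g)^-1 (invr_neq0 (mulf_neq0 (wP x i).1 (valP g))).
have TK x i : cancel (T x i) (T x i).
  by move=> g; apply: val_inj; rewrite /= invfM invrK mulrA mulVf ?(wP x i).1 ?mul1r.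
have Tcomm x i j g : T (x + ev i) j (T x i g) = T (x + ev j) i (T x j g).
  apply: val_inj => /=; have [->|ij] := eqVneq i j; first by [].
  have [b_eq _ w_eq] := weights x i j ij.
  have wj0 : w (x + ev i) j != 0 := (wP _ j).1.
  have wi0 : w (x + ev j) i != 0 := (wP _ i).1.
  by rewrite b_eq w_eq -!mulrA !invfM !invrK !mulKf.
have [Phi PhiS] := transport TK TK Tcomm (exist _ 1 (oner_neq0 R)).
exists (fun x => val (Phi x)); apply: potential_of_squares => [x|u i j ij].
  exact: valP (Phi x).
have [b_eq d_eq _] := weights u i j ij.
have [M [p [r [b [d [[_ [_ _ _ d0 _]] [_ _ qFT _]]]]]]] := square_qforms u ij.
rewrite qFT in d_eq *; rewrite !PhiS /=; split.
  by rewrite b_eq -!mulrA !invfM !invrK mulKf ?(wP _ j).1.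
rewrite d_eq; have := valP (Phi u); have := (wP u j).1 => wj0 P0.
by field; rewrite d0 wj0 P0.
Qed.

(* a potential yields a dual net with edge factors w(x,i) = 1 / (Phi(x) Phi(x + e_i)) *)
Lemma koenigs_of_potential Phi : q_potential Phi -> Koenigs f.
Proof.
case=> Phi0 dPhi.
pose w x i := (Phi x * Phi (x + ev i))^-1.
have weights u i j : i != j -> square_weights w u i j.
  move=> ij; rewrite /square_weights !dPhi //= addrA.
  have -> : u + ev i + (- ev i + ev j) = u + ev j by vec_ring.
  rewrite /w (addrAC u (ev j) (ev i)).
  by split; field; rewrite !Phi0.
pose T x i (g : point) := g + w x i *: (f (x + ev i) - f x).
pose Ti x i (g : point) := g - w x i *: (f (x + ev i) - f x).
have TiK x i : cancel (T x i) (Ti x i) by move=> g; rewrite /Ti /T addrK.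
have TKi x i : cancel (Ti x i) (T x i) by move=> g; rewrite /Ti /T subrK.
have Tcomm x i j g : T (x + ev i) j (T x i g) = T (x + ev j) i (T x j g).
  have [->|ij] := eqVneq i j; first by [].
  have [M [p [r [b [d [sh [qTT _ qFT _]]]]]]] := square_qforms x ij.
  have := weights x i j ij; rewrite /square_weights qTT qFT => /(weights_closed sh).
  by rewrite /T -!addrA => ->; rewrite [ev i + _]addrC.
have [fs fsS] := transport TiK TKi Tcomm 0.
have dual_square (u : lat) (i j : 'I_m) : i != j ->
    planar_nondeg (fs u) (fs (u + ev i)) (fs (u + ev i + ev j)) (fs (u + ev j)) /\
    dual_quad (f u) (f (u + ev i)) (f (u + ev i + ev j)) (f (u + ev j))
              (fs u) (fs (u + ev i)) (fs (u + ev i + ev j)) (fs (u + ev j)).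
  move=> ij; have [M [p [r [b [d [sh [qTT _ qFT _]]]]]]] := square_qforms u ij.
  have [b_eq d_eq _] := weights u i j ij; rewrite qTT in b_eq; rewrite qFT in d_eq.
  apply: (dual_of_weights sh _ b_eq d_eq (fsS u i) (fsS _ j) (fsS u j)).
  by rewrite invr_eq0 mulf_neq0.
by exists fs; split=> u i j ij; have [] := dual_square u i j ij.
Qed.
End KoenigsNets.

Theorem mainTheorem2 (R : realFieldType) (N m : nat) (hN : (3 <= N)%N) (hm : (2 <= m)%N)
  (f : 'rV[int]_m -> 'rV[R]_N) (hf : Qnet f) :
  Koenigs f <-> (q_closed_on true f /\ q_closed_on false f).
Proof.
split=> [koenigs | [closed_b closed_w]].
  have [Phi pot] := potential_of_koenigs hf hm koenigs.
  by split; exact: (closed_of_potential pot).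
have [Phi pot] := potential_of_closed hm closed_b closed_w.
exact: (koenigs_of_potential hf pot).
Qed.
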